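(* Under the standing assumptions (A1)–(A4), let $\alpha>0$ and $0<\gamma<\frac{1}{m-1}$, and consider the system (Algorithm A) $$\begin{aligned} \dot x&=\mathrm{Prox}_{F^m}\Big[x-\nabla F^0(x)+v+\gamma\textstyle\sum_{j=1}^{m-1}z^j\Big]-x,\\ \dot z^j&=\mathrm{Prox}_{F^j}[x-\gamma z^j]-x,\quad j=1,\dots,m-1,\\ \dot v&=-H_{nq}^{-1}(x-d)-\alpha L_{nq}v-w,\\ \dot w&=\alpha L_{nq}v, \end{aligned}$$ with state $(x,z,v,w)\in\mathbb{R}^{nq}\times\mathbb{R}^{(m-1)nq}\times\mathbb{R}^{nq}\times\mathbb{R}^{nq}$, $z=((z^1)^T,\dots,(z^{m-1})^T)^T$. If $(x^*,z^*,v^*,w^* )$ is an equilibrium of this system and $(\mathbf{1}_n\otimes I_q)^TH_{nq}w^*=\mathbf{0}_q$, then $x^*$ is a solution of the problem $\min_x \sum_i f_i(x_i)$ s.t. $\sum_i x_i=\sum_i d_i$.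
   Context: Standing setup: $n$ agents; agent $i$ has state $x_i\in\mathbb{R}^q$, and $x=(x_1^T,\dots,x_n^T)^T\in\mathbb{R}^{nq}$. Given $d_i\in\mathbb{R}^q$, $d=(d_1^T,\dots,d_n^T)^T$. Integer $m\ge 2$. Each local cost is $f_i=\sum_{j=0}^m f_i^j$; $F^j(x)=\sum_{i=1}^n f_i^j(x_i)$. $\nabla F^0(x)=(\nabla f_1^0(x_1)^T,\dots,\nabla f_n^0(x_n)^T)^T$. Assumptions: (A1) each $f_i^0$ is twice continuously differentiable and strongly convex with a common constant $c>m-1$; (A2) each $f_i^j$, $j=1,\dots,m$, is a proper closed convex function; (A3) the graph is weighted, directed and strongly connected; (A4) the problem is feasible. Proximal operator: $\mathrm{prox}_f[\theta]=\arg\min_\delta\{f(\delta)+\frac12\|\delta-\theta\|^2\}$, and for $\xi=(\xi_1,\dots,\xi_n)\in\mathbb{R}^{nq}$, $\mathrm{Prox}_{F^j}[\xi]=(\mathrm{prox}_{f_1^j}[\xi_1]^T,\dots,\mathrm{prox}_{f_n^j}[\xi_n]^T)^T$. Graph: weighted adjacency matrix $\mathcal{A}=[a_{ij}]$ ($a_{ij}>0$ iff agent $i$ receives from $j$, $a_{ii}=0$), Laplacian $L_n=D^{in}-\mathcal{A}$ with $D^{in}=\mathrm{diag}(\sum_j a_{ij})$; $h=(h_1,\dots,h_n)^T$ is the positive left eigenvector with $h^TL_n=0$, $\sum_i h_i=1$; $H=\mathrm{diag}(h_1,\dots,h_n)$, $H_{nq}=H\otimes I_q$, $L_{nq}=L_n\otimes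 I_q$. *)

From Stdlib Require Import Reals.
From mathcomp Require Import all_boot.
Set Implicit Arguments. Unset Strict Implicit. Unset Printing Implicit Defensive.

Local Open Scope R_scope.

Definition sumR (n : nat) (F : 'I_n -> R) : R := \big[Rplus/R0]_(i < n) F i.

Definition vec (q : nat) := 'I_q -> R.
Definition vadd q (u v : vec q) : vec q := fun k => u k + v k.
Definition vsub q (u v : vec q) : vec q := fun k => u k - v k.
Definition vscale q (a : R) (u : vec q) : vec q := fun k => a * u k.
Definition vzero q : vec q := fun _ => 0.
Definition dot q (u v : vec q) : R := sumR (fun k => u k * v k).
Definition vnorm q (u : vec q) : R := sqrt (dot u u).
Fixpoint vsum1 q (G : nat -> vec q) (k : nat) : vec q :=
  match k with O => @vzero q | S k' => vadd (vsum1 G k') (G (S k')) end.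
Definition comb q (t : R) (x y : vec q) : vec q :=
  vadd (vscale t x) (vscale (1 - t) y).

Inductive ereal := EFin (r : R) | EInf.
Definition eplus (a b : ereal) : ereal :=
  match a, b with EFin x, EFin y => EFin (x + y) | _, _ => EInf end.
Definition ele (a b : ereal) : Prop :=
  match a, b with
  | EFin x, EFin y => x <= y
  | _, EInf => True
  | EInf, EFin _ => False
  end.
Definition elt_fin (a : R) (b : ereal) : Prop :=
  match b with EFin y => a < y | EInf => True end.
Fixpoint esum1 (G : nat -> ereal) (k : nat) : ereal :=
  match k with O => EFin 0 | S k' => eplus (esum1 G k') (G (S k')) end.
Definition esumI (n : nat) (G : 'I_n -> ereal) : ereal :=
  \big[eplus/EFin 0]_(i < n) G i.

(* proper, closed (= lower semicontinuous), convex extended-valued functions *)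
Definition proper_fun q (f : vec q -> ereal) : Prop :=
  exists x r, f x = EFin r.
Definition closed_fun q (f : vec q -> ereal) : Prop :=
  forall (x : vec q) (a : R), elt_fin a (f x) ->
    exists delta, 0 < delta /\
      forall y, vnorm (vsub y x) < delta -> elt_fin a (f y).
Definition convex_fun q (f : vec q -> ereal) : Prop :=
  forall (x y : vec q) (rx ry t : R), f x = EFin rx -> f y = EFin ry ->
    0 <= t <= 1 -> ele (f (comb t x y)) (EFin (t * rx + (1 - t) * ry)).

Definition strongly_convex q (c : R) (f : vec q -> R) : Prop :=
  forall (x y : vec q) (t : R), 0 <= t <= 1 ->
    f (comb t x y) <= t * f x + (1 - t) * f y
                      - c / 2 * t * (1 - t) * (vnorm (vsub x y)) ^ 2.

Definition has_gradient q (f : vec q -> R) (g : vec q -> vec q) : Prop :=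
  forall (x : vec q) (eps : R), 0 < eps -> exists delta, 0 < delta /\
    forall y, vnorm (vsub y x) < delta ->
      Rabs (f y - f x - dot (g x) (vsub y x)) <= eps * vnorm (vsub y x).

Definition C2_with_gradient q (f : vec q -> R) (g : vec q -> vec q) : Prop :=
  has_gradient f g /\
  exists Hs : vec q -> 'I_q -> 'I_q -> R,
    (forall (x : vec q) (eps : R), 0 < eps -> exists delta, 0 < delta /\
       forall y, vnorm (vsub y x) < delta ->
         vnorm (vsub (vsub (g y) (g x)) (fun k => sumR (fun l => Hs x k l * (y l - x l))))
           <= eps * vnorm (vsub y x)) /\
    (forall (x : vec q) (eps : R), 0 < eps -> exists delta, 0 < delta /\
       forall y, vnorm (vsub y x) < delta ->
         forall k l, Rabs (Hs y k l - Hs x k l) < eps).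

Definition is_prox q (f : vec q -> ereal) (theta p : vec q) : Prop :=
  forall delta : vec q,
    ele (eplus (f p) (EFin (/2 * (vnorm (vsub p theta)) ^ 2)))
        (eplus (f delta) (EFin (/2 * (vnorm (vsub delta theta)) ^ 2))).

(* graph: a i j > 0 iff agent i receives from agent j (edge j -> i) *)
Inductive reach n (a : 'I_n -> 'I_n -> R) : 'I_n -> 'I_n -> Prop :=
| reach_refl i : reach a i i
| reach_step i j k : reach a i j -> 0 < a k j -> reach a i k.
Definition strongly_connected n (a : 'I_n -> 'I_n -> R) : Prop :=
  forall i j, reach a i j.
Definition laplacian n (a : 'I_n -> 'I_n -> R) (i k : 'I_n) : R :=
  (if i == k then sumR (fun l => a i l) else 0) - a i k.

Definition objective n q m (f0 : 'I_n -> vec q -> R)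
  (fj : 'I_n -> nat -> vec q -> ereal) (x : 'I_n -> vec q) : ereal :=
  esumI (fun i => eplus (EFin (f0 i (x i))) (esum1 (fun j => fj i j (x i)) m)).
Definition constraint n q (d x : 'I_n -> vec q) : Prop :=
  forall k : 'I_q, sumR (fun i => x i k) = sumR (fun i => d i k).
Definition is_solution n q m f0 fj (d x : 'I_n -> vec q) : Prop :=
  constraint d x /\
  forall y, constraint d y -> ele (@objective n q m f0 fj x) (objective m f0 fj y).

(** At an equilibrium, [L v = 0] forces [v] to be constant across agents by a
    maximum principle on the strongly connected graph, while the [v]- and
    [w]-equations together with [h^T w = 0] give the coupling constraint.
    For each agent, the proximal fixed points are subgradient inequalities for
    [f_i^j] (the [z^j]-terms cancel when summed over [j]) and the gradient
    inequality of the convex [f_i^0] completes them to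
    [f_i(x_i) + <v_i, y_i - x_i> <= f_i(y_i)].  Summing over agents, the
    linear terms cancel because [v] is constant and [x], [y] share the same
    total. *)
From HB Require Import structures.
From Stdlib Require Import Reals Lra FunctionalExtensionality.
From mathcomp Require Import all_boot.
Set Implicit Arguments. Unset Strict Implicit.
Local Open Scope R_scope.

HB.instance Definition _ := Monoid.isComLaw.Build R R0 Rplus
  (fun x y z => esym (Rplus_assoc x y z)) Rplus_comm Rplus_0_l.

Lemma sumR_ext n (F G : 'I_n -> R) : (forall k, F k = G k) -> sumR F = sumR G.
Proof. by move=> FG; apply: eq_bigr. Qed.

Lemma sumR_add n (F G : 'I_n -> R) :
  sumR (fun k => F k + G k) = sumR F + sumR G.
Proof. exact: big_split. Qed.

Lemma sumR_scal n c (F : 'I_n -> R) : sumR (fun k => c * F k) = c * sumR F.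
Proof.
apply: (big_ind2 (fun a b => a = c * b)) => [|? ? ? ? -> ->|//].
- by rewrite Rmult_0_r.
- by rewrite Rmult_plus_distr_l.
Qed.

Lemma sumR_le n (F G : 'I_n -> R) : (forall k, F k <= G k) -> sumR F <= sumR G.
Proof. by move=> FG; apply: (big_ind2 Rle) => // *; lra. Qed.

Lemma sumR_ge0 n (F : 'I_n -> R) : (forall k, 0 <= F k) -> 0 <= sumR F.
Proof. by move=> F0; apply: (big_ind (Rle 0)) => // *; lra. Qed.

Lemma sumR_exchange n p (F : 'I_n -> 'I_p -> R) :
  sumR (fun i => sumR (fun k => F i k)) = sumR (fun k => sumR (fun i => F i k)).
Proof. exact: exchange_big. Qed.

Lemma sumR_delta n (k : 'I_n) (G : 'I_n -> R) :
  sumR (fun l => if k == l then G l else 0) = G k.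
Proof.
rewrite /sumR (bigD1 k) //= eqxx big1 ?Rplus_0_r // => i /negPf.
by rewrite eq_sym => ->.
Qed.

Lemma sumR_ge0_eq0 n (F : 'I_n -> R) :
  (forall k, 0 <= F k) -> sumR F = 0 -> forall j, F j = 0.
Proof.
move=> F0 sum0 j; move: sum0; rewrite /sumR (bigD1 j) //=.
have : 0 <= \big[Rplus/R0]_(i < n | i != j) F i by apply: (big_ind (Rle 0)) => // *; lra.
move: (\big[Rplus/R0]_(i < n | i != j) F i) => rest; have := F0 j; lra.
Qed.

Lemma le_of_le_add_vanishing A B C :
  0 <= C -> (forall t, 0 < t <= 1 -> A <= B + t * C) -> A <= B.
Proof.
move=> C0 le_t; case: (Rle_lt_dec A B) => // BltA.
have eC : 0 < A - B + C by lra.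
have t0 : 0 < (A - B) / (A - B + C) by apply: Rdiv_lt_0_compat; lra.
have tE : (A - B) / (A - B + C) * (A - B + C) = A - B by field; lra.
have t1 : (A - B) / (A - B + C) <= 1 by nra.
have := le_t _ (conj t0 t1); nra.
Qed.

Lemma dot_ge0 q (u : vec q) : 0 <= dot u u.
Proof. by apply: sumR_ge0 => k; nra. Qed.

Lemma vnorm_sq q (u : vec q) : vnorm u ^ 2 = dot u u.
Proof. exact/pow2_sqrt/dot_ge0. Qed.

Lemma dot_addl q (A B C : vec q) : dot (vadd A B) C = dot A C + dot B C.
Proof. by rewrite /dot -sumR_add; apply: sumR_ext => k; rewrite /vadd; ring. Qed.

Lemma dot_scaler q (A B : vec q) t : dot A (fun k => t * B k) = t * dot A B.
Proof. by rewrite /dot -sumR_scal; apply: sumR_ext => k; ring. Qed.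

Lemma dot_oppl q (A B : vec q) : dot (fun k => - A k) B = - dot A B.
Proof.
have -> : - dot A B = -1 * dot A B by ring.
by rewrite /dot -sumR_scal; apply: sumR_ext => k; ring.
Qed.

Lemma dot0l q (C : vec q) : dot (@vzero q) C = 0.
Proof.
by rewrite /dot (@sumR_ext _ _ (fun k => 0 * C k)) ?sumR_scal ?Rmult_0_l.
Qed.

Lemma dot_sqr_addr q (A B : vec q) t :
  dot (fun k => A k + t * B k) (fun k => A k + t * B k)
  = dot A A + 2 * t * dot A B + t ^ 2 * dot B B.
Proof.
rewrite /dot -!sumR_scal -!sumR_add; apply: sumR_ext => k; ring.
Qed.

Lemma vnorm_scal q (u : vec q) t : 0 <= t -> vnorm (fun k => t * u k) = t * vnorm u.
Proof.
move=> t0; rewrite /vnorm.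
have -> : dot (fun k => t * u k) (fun k => t * u k) = t * t * dot u u.
  by rewrite /dot -sumR_scal; apply: sumR_ext => k; ring.
rewrite sqrt_mult_alt; last by nra.
by rewrite sqrt_square.
Qed.

(* Comparing [f p + |p - theta|^2/2] with its value at [p + t (y - p)] and
   letting [t -> 0] is the variational characterisation of the proximal point. *)
Lemma prox_subgradient q (f : vec q -> ereal) theta p :
  proper_fun f -> convex_fun f -> is_prox f theta p ->
  exists fp, f p = EFin fp /\
    forall y fy, f y = EFin fy -> fp + dot (vsub theta p) (vsub y p) <= fy.
Proof.
move=> [x0 [r0 fx0]] f_cvx p_prox.
have [fp fpE] : exists fp, f p = EFin fp.
  by move: (p_prox x0); rewrite fx0; case: (f p) => [fp _|[]]; exists fp.
exists fp; split => // y fy fyE.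
apply: (@le_of_le_add_vanishing _ _ (/2 * dot (vsub y p) (vsub y p))).
  by have := dot_ge0 (vsub y p); lra.
move=> t t01.
have := f_cvx y p fy fp t fyE fpE (conj (Rlt_le _ _ (proj1 t01)) (proj2 t01)).
case ftE: (f (comb t y p)) => [r|] //= r_le.
move: (p_prox (comb t y p)); rewrite fpE ftE !vnorm_sq /=.
have -> : vsub (comb t y p) theta = (fun k => vsub p theta k + t * vsub y p k).
  by apply: functional_extensionality => k; rewrite /vsub /comb /vadd /vscale; ring.
have -> : vsub theta p = (fun k => - vsub p theta k).
  by apply: functional_extensionality => k; rewrite /vsub; ring.
rewrite dot_sqr_addr dot_oppl.
move: (dot (vsub p theta) _) (dot (vsub p theta) (vsub y p)) (dot (vsub y p) _).
move=> D X Q prox_le.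
have : t * (fp - X - fy - t * (/2 * Q)) <= 0 by nra.
nra.
Qed.

(* The first-order expansion at [x] along [y - x] with a step [t] short enough
   for the [eps]-accuracy, against the convexity chord through [x] and [y]. *)
Lemma strongly_convex_gradient_ineq q (f : vec q -> R) g c :
  has_gradient f g -> 0 <= c -> strongly_convex c f ->
  forall x y, f x + dot (g x) (vsub y x) <= f y.
Proof.
move=> f_grad c0 f_sc x y.
set u := vsub y x; set N := vnorm u.
have N0 : 0 <= N by apply: sqrt_pos.
apply: (@le_of_le_add_vanishing _ _ N) => // eps [eps0 _].
have [delta [delta0 delta_ok]] := f_grad x eps eps0.
set t := delta / (2 * (N + delta)).
have tE : t * (2 * (N + delta)) = delta by rewrite /t; field; lra.
have t0 : 0 < t by apply: Rdiv_lt_0_compat; lra.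
have t1 : t <= 1 by nra.
have tN : t * N < delta by nra.
have stepE : vsub (comb t y x) x = (fun k => t * u k).
  by apply: functional_extensionality => k; rewrite /u /vsub /comb /vadd /vscale; ring.
have := delta_ok (comb t y x); rewrite stepE vnorm_scal ?dot_scaler; last lra.
move=> /(_ tN) abs_le.
have := Rle_abs (- (f (comb t y x) - f x - t * dot (g x) u)); rewrite Rabs_Ropp.
have := f_sc y x t (conj (Rlt_le _ _ t0) t1).
have : 0 <= c / 2 * t * (1 - t) * vnorm u ^ 2.
  apply: Rmult_le_pos; last exact/pow_le/sqrt_pos.
  by apply: Rmult_le_pos; [apply: Rmult_le_pos|]; lra.
rewrite -/u -/N in abs_le *.
move: (f (comb t y x)) (dot (g x) u) (vnorm u ^ 2) abs_le => F D W *.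
have : t * (f y - f x - D + eps * N) >= 0 by nra.
nra.
Qed.

Definition fine (e : ereal) : R := match e with EFin r => r | EInf => 0 end.

Fixpoint rsum1 (g : nat -> R) (k : nat) : R :=
  match k with O => 0 | S k' => rsum1 g k' + g (S k') end.

Lemma esum1_fin G k : (forall j, (1 <= j <= k)%N -> G j = EFin (fine (G j))) ->
  esum1 G k = EFin (rsum1 (fun j => fine (G j)) k).
Proof.
elim: k => [|k IH] G_fin //=.
rewrite IH; last by move=> j /andP [j1 jk]; rewrite G_fin // j1 ltnW.
by rewrite G_fin // leqnn andbT.
Qed.

Lemma esum1_EFinP G k r : esum1 G k = EFin r ->
  (forall j, (1 <= j <= k)%N -> G j = EFin (fine (G j))) /\
  r = rsum1 (fun j => fine (G j)) k.
Proof.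
elim: k r => [|k IH] r /=.
  by move=> [<-]; split => // j /andP [j1 j0]; move: (leq_trans j1 j0).
case E1: (esum1 G k) => [r1|] //; case E2: (G k.+1) => [r2|] // [<-].
have [G_fin r1E] := IH _ E1; split; last by rewrite r1E.
move=> j /andP [j1]; rewrite leq_eqVlt ltnS => /orP [/eqP ->|jk].
  by rewrite E2.
by rewrite G_fin // j1.
Qed.

Lemma eplusA : associative eplus.
Proof. by case=> [x|] [y|] [z|] //=; rewrite Rplus_assoc. Qed.

Lemma eplusC : commutative eplus.
Proof. by case=> [x|] [y|] //=; rewrite Rplus_comm. Qed.

Lemma eplus0e : left_id (EFin 0) eplus.
Proof. by case=> [x|] //=; rewrite Rplus_0_l. Qed.

HB.instance Definition _ := Monoid.isComLaw.Build ereal (EFin 0) eplus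
  eplusA eplusC eplus0e.

Lemma esumI_fin n (G : 'I_n -> ereal) :
  (forall i, G i = EFin (fine (G i))) -> esumI G = EFin (sumR (fun i => fine (G i))).
Proof. by move=> G_fin; apply: (big_ind2 (fun e r => e = EFin r)) => // ? ? ? ? -> ->. Qed.

Lemma esumI_EFin n (G : 'I_n -> ereal) r :
  esumI G = EFin r -> forall i, G i = EFin (fine (G i)).
Proof. by rewrite /esumI => sumE i; move: sumE; rewrite (bigD1 i) //; case: (G i). Qed.

Lemma esumI_le n (G H : 'I_n -> ereal) (c : 'I_n -> R) :
  (forall i, G i = EFin (fine (G i))) ->
  (forall i b, H i = EFin b -> fine (G i) + c i <= b) -> sumR c = 0 ->
  ele (esumI G) (esumI H).
Proof.
move=> G_fin GH c0; rewrite esumI_fin //.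
case E: (esumI H) => [r|] //=; have H_fin := esumI_EFin E.
rewrite esumI_fin // in E; case: E => <-.
have := sumR_le (fun i => GH i _ (H_fin i)); rewrite sumR_add c0; lra.
Qed.

(* The proximal steps of the blocks [j < m] telescope: their linear terms add
   up to the [gamma * sum_j z^j] fed into the last block. *)
Lemma prox_chain_ineq q K (fj : nat -> vec q -> ereal) gamma (xi yi : vec q)
    (zs : nat -> vec q) :
  (forall j, (1 <= j <= K)%N -> proper_fun (fj j)) ->
  (forall j, (1 <= j <= K)%N -> convex_fun (fj j)) ->
  (forall j, (1 <= j <= K)%N -> is_prox (fj j) (vsub xi (vscale gamma (zs j))) xi) ->
  (forall j, (1 <= j <= K)%N -> fj j yi = EFin (fine (fj j yi))) ->
  rsum1 (fun j => fine (fj j xi)) K - gamma * dot (vsum1 zs K) (vsub yi xi)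
  <= rsum1 (fun j => fine (fj j yi)) K.
Proof.
move=> fj_proper fj_cvx prox_z fy_fin.
suff chain k : (k <= K)%N ->
    rsum1 (fun j => fine (fj j xi)) k - gamma * dot (vsum1 zs k) (vsub yi xi)
    <= rsum1 (fun j => fine (fj j yi)) k by exact: chain.
elim: k => [|k IH] k_le /=; first by rewrite dot0l; lra.
have kK : (1 <= k.+1 <= K)%N by rewrite k_le.
have [fp [fpE fp_le]] := prox_subgradient (fj_proper _ kK) (fj_cvx _ kK) (prox_z _ kK).
have zres : dot (vsub (vsub xi (vscale gamma (zs k.+1))) xi) (vsub yi xi)
            = - gamma * dot (zs k.+1) (vsub yi xi).
  by rewrite -dot_scaler; apply: sumR_ext => l; rewrite /vsub /vscale; ring.
have := fp_le yi _ (fy_fin _ kK); rewrite zres.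
have := IH (ltnW k_le).
by rewrite fpE dot_addl /=; lra.
Qed.

Lemma agent_subgradient_ineq q m (f0 : vec q -> R) g0 (fj : nat -> vec q -> ereal)
    c gamma (xi yi vi : vec q) (zs : nat -> vec q) :
  (2 <= m)%N -> has_gradient f0 g0 -> 0 <= c -> strongly_convex c f0 ->
  (forall j, (1 <= j <= m)%N -> proper_fun (fj j)) ->
  (forall j, (1 <= j <= m)%N -> convex_fun (fj j)) ->
  is_prox (fj m) (vadd (vadd (vsub xi (g0 xi)) vi) (vscale gamma (vsum1 zs (m - 1)))) xi ->
  (forall j, (1 <= j <= m - 1)%N -> is_prox (fj j) (vsub xi (vscale gamma (zs j))) xi) ->
  exists a, eplus (EFin (f0 xi)) (esum1 (fun j => fj j xi) m) = EFin a /\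
    forall b, eplus (EFin (f0 yi)) (esum1 (fun j => fj j yi) m) = EFin b ->
      a + dot vi (vsub yi xi) <= b.
Proof.
move=> m2 f0_grad c0 f0_sc fj_proper fj_cvx prox_m prox_z.
have mE : m = (m - 1).+1 by rewrite subn1 prednK // ltnW.
have m_range : (1 <= m <= m)%N by rewrite leqnn andbT ltnW.
have z_range j : (1 <= j <= m - 1)%N -> (1 <= j <= m)%N.
  by case/andP=> -> jm /=; apply: leq_trans jm (leq_subr _ _).
have [fm [fmE subgrad_m]] := prox_subgradient (fj_proper _ m_range) (fj_cvx _ m_range) prox_m.
have fx_fin j : (1 <= j <= m)%N -> fj j xi = EFin (fine (fj j xi)).
  move=> j_range; case: (eqVneq j m) => [->|jNm]; first by rewrite fmE.
  have jz : (1 <= j <= m - 1)%N.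
    by case/andP: j_range => -> jm; rewrite -ltnS -mE ltn_neqAle jNm jm.
  have jm := z_range j jz.
  by have [fp [-> _]] := prox_subgradient (fj_proper _ jm) (fj_cvx _ jm) (prox_z j jz).
set u := vsub yi xi.
exists (f0 xi + rsum1 (fun j => fine (fj j xi)) m); split; first by rewrite esum1_fin.
move=> b; case E: (esum1 (fun j => fj j yi) m) => [r|] //= [<-].
have [fy_fin ->] := esum1_EFinP E.
have mres : dot (vsub (vadd (vadd (vsub xi (g0 xi)) vi) (vscale gamma (vsum1 zs (m - 1)))) xi) u
            = - dot (g0 xi) u + dot vi u + gamma * dot (vsum1 zs (m - 1)) u.
  rewrite -dot_oppl -dot_scaler /dot -!sumR_add; apply: sumR_ext => k.
  by rewrite /vsub /vadd /vscale; ring.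
have := prox_chain_ineq (fun j jz => fj_proper j (z_range j jz))
  (fun j jz => fj_cvx j (z_range j jz)) prox_z (fun j jz => fy_fin j (z_range j jz)).
have := subgrad_m yi _ (fy_fin _ m_range); rewrite -/u mres.
have := strongly_convex_gradient_ineq f0_grad c0 f0_sc xi yi.
have rsum1_split g : rsum1 g m = rsum1 g (m - 1) + g m by rewrite {1}mE /= -mE.
by rewrite !rsum1_split fmE /= -/u; lra.
Qed.

Lemma exists_argmax n (F : 'I_n -> R) (i0 : 'I_n) : exists M, forall y, F y <= F M.
Proof.
suff [M M_max] : exists M, forall y, y \in i0 :: enum 'I_n -> F y <= F M.
  by exists M => y; apply: M_max; rewrite in_cons mem_enum orbT.
elim: (enum 'I_n) i0 => [|y0 s IH] x0.
  by exists x0 => y; rewrite inE => /eqP ->; lra.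
have [M M_max] := IH y0.
case: (Rle_lt_dec (F x0) (F M)) => [x0M|Mx0].
  by exists M => y; rewrite in_cons => /orP [/eqP ->|/M_max].
exists x0 => y; rewrite in_cons => /orP [/eqP ->|/M_max]; lra.
Qed.

Lemma reach_backward_closed n (a : 'I_n -> 'I_n -> R) (P : 'I_n -> Prop) :
  (forall k j, P k -> 0 < a k j -> P j) -> forall i k, reach a i k -> P k -> P i.
Proof.
by move=> P_closed i k; elim=> // i' j k' _ IH a_kj Pk; exact: IH (P_closed _ _ Pk a_kj).
Qed.

Lemma laplacian_mulE n (a : 'I_n -> 'I_n -> R) (v : 'I_n -> R) i :
  sumR (fun l => laplacian a i l * v l) = sumR (fun l => a i l * (v i - v l)).
Proof.
rewrite (@sumR_ext _ _ (fun l => (if i == l then sumR (fun l => a i l) * v l else 0)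
                                 + (-1) * (a i l * v l))); last first.
  by move=> l; rewrite /laplacian; case: (i == l); ring.
rewrite sumR_add sumR_delta sumR_scal.
rewrite (@sumR_ext _ (fun l => a i l * (v i - v l)) (fun l => v i * a i l + (-1) * (a i l * v l))).
  by rewrite sumR_add !sumR_scal Rmult_comm.
by move=> l; ring.
Qed.

(* Maximum principle: at a maximiser [k] the row [sum_l a k l (v k - v l)]
   has nonnegative terms, so every in-neighbour of [k] is a maximiser too. *)
Lemma laplacian_kernel_const n (a : 'I_n -> 'I_n -> R) (v : 'I_n -> R) :
  (forall i k, 0 <= a i k) -> strongly_connected a ->
  (forall i, sumR (fun l => laplacian a i l * v l) = 0) -> forall i l, v i = v l.
Proof.
move=> a0 a_conn Lv0 i l.
have [M M_max] := exists_argmax v i.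
suff eqM p : v p = v M by rewrite !eqM.
apply: (reach_backward_closed (P := fun j => v j = v M)) (a_conn p M) _ => // k j vkM akj.
have terms_ge0 r : 0 <= a k r * (v k - v r).
  by apply: Rmult_le_pos => //; have := M_max r; lra.
have terms0 := sumR_ge0_eq0 terms_ge0 (etrans (esym (laplacian_mulE a v k)) (Lv0 k)).
by case: (Rmult_integral _ _ (terms0 j)); lra.
Qed.

Lemma sumR_const_mul0 n (V U : 'I_n -> R) :
  (forall i l, V i = V l) -> sumR U = 0 -> sumR (fun i => V i * U i) = 0.
Proof.
case: n V U => [|n] V U V_const U0; first by rewrite /sumR big_ord0.
rewrite (@sumR_ext _ _ (fun i => V ord0 * U i)) ?sumR_scal ?U0 ?Rmult_0_r // => i.
by rewrite (V_const i ord0).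
Qed.

Lemma consensus_dot_sum0 n q (d x y v : 'I_n -> vec q) :
  (forall k i l, v i k = v l k) -> constraint d x -> constraint d y ->
  sumR (fun i => dot (v i) (vsub (y i) (x i))) = 0.
Proof.
move=> v_const x_sum y_sum; rewrite /dot sumR_exchange.
apply: big1 => k _; apply: sumR_const_mul0 => //.
rewrite /vsub (@sumR_ext _ _ (fun i => y i k + -1 * x i k)) => [|i]; last by ring.
by rewrite sumR_add sumR_scal y_sum x_sum; ring.
Qed.

Lemma equilibrium_constraint n q (d x w : 'I_n -> vec q) (h : 'I_n -> R) :
  (forall i, 0 < h i) -> (forall i k, - ((x i k - d i k) / h i) - w i k = 0) ->
  (forall k, sumR (fun i => h i * w i k) = 0) -> constraint d x.
Proof.
move=> h0 xE hw0 k.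
rewrite (@sumR_ext _ _ (fun i => d i k + -1 * (h i * w i k))) => [|i].
  by rewrite sumR_add sumR_scal hw0; ring.
have hi0 := h0 i.
have xdE : x i k - d i k = h i * ((x i k - d i k) / h i) by field; lra.
have eE : (x i k - d i k) / h i = - w i k by have := xE i k; lra.
by rewrite eE -Ropp_mult_distr_r in xdE; lra.
Qed.

Theorem lemma4
  (n q m : nat) (Hm : (2 <= m)%N)
  (f0 : 'I_n -> vec q -> R) (grad0 : 'I_n -> vec q -> vec q)
  (fj : 'I_n -> nat -> vec q -> ereal)
  (d : 'I_n -> vec q) (a : 'I_n -> 'I_n -> R) (h : 'I_n -> R)
  (c alpha gamma : R)
  (* (A1) *)
  (HC2 : forall i, C2_with_gradient (f0 i) (grad0 i))
  (Hc : (INR m - 1 < c))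
  (Hsc : forall i, strongly_convex c (f0 i))
  (* (A2) *)
  (Hproper : forall i j, (1 <= j <= m)%N -> proper_fun (fj i j))
  (Hclosed : forall i j, (1 <= j <= m)%N -> closed_fun (fj i j))
  (Hconvex : forall i j, (1 <= j <= m)%N -> convex_fun (fj i j))
  (* (A3) *)
  (Ha_nonneg : forall i k, (0 <= a i k))
  (Ha_diag : forall i, a i i = 0)
  (Hconn : strongly_connected a)
  (* h: positive normalized left eigenvector of the Laplacian *)
  (Hh_pos : forall i, (0 < h i))
  (Hh_left : forall k, sumR (fun i => h i * laplacian a i k) = 0)
  (Hh_sum : sumR h = 1)
  (* (A4) *)
  (Hfeas : exists y, constraint d y /\ exists r, objective m f0 fj y = EFin r)
  (Halpha : (0 < alpha))
  (Hgamma : (0 < gamma /\ gamma < / (INR m - 1)))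
  (* equilibrium (x^*, z^*, v^*, w^* ) of Algorithm A *)
  (x : 'I_n -> vec q) (z : nat -> 'I_n -> vec q) (v w : 'I_n -> vec q)
  (Eq_x : forall i,
     is_prox (fj i m)
       (vadd (vadd (vsub (x i) (grad0 i (x i))) (v i))
             (vscale gamma (vsum1 (fun j => z j i) (m - 1)))) (x i))
  (Eq_z : forall j i, (1 <= j <= m - 1)%N ->
     is_prox (fj i j) (vsub (x i) (vscale gamma (z j i))) (x i))
  (Eq_v : forall i k,
     (- ((x i k - d i k) / h i)
      - alpha * sumR (fun l => laplacian a i l * v l k) - w i k = 0))
  (Eq_w : forall i k, (alpha * sumR (fun l => laplacian a i l * v l k) = 0))
  (Hw : forall k, sumR (fun i => h i * w i k) = 0) :
  is_solution m f0 fj d x.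
Proof.
(* Closedness, feasibility, the eigenvector equations for [h], the Hessian
   part of (A1), [c > m - 1] beyond [c >= 0] and the bounds on [gamma] matter
   only for the convergence of the flow, not for its equilibria. *)
have Lv0 k i : sumR (fun l => laplacian a i l * v l k) = 0.
  by have := Eq_w i k; move: (sumR _) => S; nra.
have v_const k := laplacian_kernel_const Ha_nonneg Hconn (fun i => Lv0 k i).
have x_sum : constraint d x.
  by apply: (equilibrium_constraint Hh_pos _ Hw) => i k; have := Eq_v i k; rewrite Eq_w; lra.
have c0 : 0 <= c.
  have : 1 <= INR m by apply: (le_INR 1); apply/leP; exact: ltnW.
  lra.
split => // y y_sum.
have agent i := agent_subgradient_ineq (y i) Hm (proj1 (HC2 i)) c0 (Hsc i)
  (Hproper i) (Hconvex i) (Eq_x i) (fun j => Eq_z j i).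
apply: (esumI_le (c := fun i => dot (v i) (vsub (y i) (x i)))).
- by move=> i; have [r [-> _]] := agent i.
- by move=> i b; have [r [-> r_le]] := agent i; exact: r_le.
- exact: consensus_dot_sum0.
Qed.
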